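(* Let $p\ge1$ and let $X=(X,d,\mu)$ be an infinitesimally doubling metric measure space which is $p$-thick quasiconvex with constant $C\ge1$. Then every $u\in N^{1,p}(X)$ whose minimal $p$-weak upper gradient satisfies $g_u\le1$ almost everywhere has a $C$-Lipschitz representative.
   Context: A metric measure space is a proper metric space with a Borel regular outer measure positive and finite on balls; infinitesimally doubling means $\limsup_{r\to0}\mu(B(x,2r))/\mu(B(x,r))<\infty$ for $\mu$-a.e. $x$. $\operatorname{Mod}_p\Gamma=\inf\int\rho^pd\mu$ over Borel $\rho\ge0$ with $\int_\gamma\rho\ge1$ for all $\gamma\in\Gamma$. $N^{1,p}(X)$ is the Newtonian Sobolev space; $g_u$ the minimal $p$-weak upper gradient. For $E,F\subset X$ and $C\ge1$, $\Gamma(E,F;C)$ is the family of curves $\gamma:[0,1]\to X$ with $\gamma(0)\in E$, $\gamma(1)\in F$ and $\ell(\gamma)\le Cd(\gamma(0),\gamma(1))$. $X$ is $p$-thick quasiconvex with constant $C$ if $\operatorname{Mod}_p\Gamma(E,F;C)>0$ for all measurable $E,F$ of positive measure. *)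

From HB Require Import structures.
From mathcomp Require Import all_boot all_order all_algebra.
From mathcomp Require Import all_classical all_reals all_analysis measurable_realfun.
Set Implicit Arguments. Unset Strict Implicit. Unset Printing Implicit Defensive.
Import Order.TTheory GRing.Theory Num.Theory.
Local Open Scope classical_set_scope.
Local Open Scope ring_scope.

Section MMS.
Context {R : realType} {disp : measure_display} {T : measurableType disp}.
Variable dist : T -> T -> R.

Definition is_metric : Prop :=
  [/\ forall x y, 0 <= dist x y,
      forall x y, dist x y = 0 <-> x = y,
      forall x y, dist x y = dist y x &
      forall x y z, dist x z <= dist x y + dist y z].

Definition dball (x : T) (r : R) : set T := [set y | dist x y < r].

Definition dopen (A : set T) : Prop :=
  forall x, A x -> exists2 r : R, 0 < r & dball x r `<=` A.

Definition dclosed (A : set T) : Prop := dopen (~` A).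

Definition dbounded (A : set T) : Prop := exists x r, A `<=` dball x r.

Definition dconverges (s : nat -> T) (x : T) : Prop :=
  forall e : R, 0 < e -> exists N, forall n, (N <= n)%N -> dist (s n) x < e.

(* sequential compactness (equivalent to compactness in metric spaces) *)
Definition dcompact (K : set T) : Prop :=
  forall s : nat -> T, (forall n, K (s n)) ->
    exists (phi : nat -> nat) (x : T),
      (forall n m, (n < m)%N -> (phi n < phi m)%N) /\ K x /\ dconverges (s \o phi) x.

Definition dproper : Prop :=
  forall K, dclosed K -> dbounded K -> dcompact K.

Definition borel_structure : Prop :=
  (@measurable disp T) = <<s dopen >>.

Variable mu : {measure set T -> \bar R}.

Definition balls_pos_finite : Prop :=
  forall x (r : R), 0 < r -> (0 < mu (dball x r))%E /\ (mu (dball x r) < +oo)%E.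

Definition metric_measure_space : Prop :=
  [/\ is_metric, dproper, borel_structure & balls_pos_finite].

(* limsup_{r->0} mu(B(x,2r))/mu(B(x,r)) < oo for mu-a.e. x, unfolded *)
Definition infinitesimally_doubling : Prop :=
  {ae mu, forall x, exists M : R, exists2 r0 : R, 0 < r0 &
     forall r : R, 0 < r -> r < r0 ->
       (mu (dball x (2 * r)) <= M%:E * mu (dball x r))%E}.

(* curves gamma : [0,1] -> X, represented as functions R -> T (only the
   values on [0,1] matter) *)
Definition curve (g : R -> T) : Prop :=
  forall t, 0 <= t <= 1 -> forall e : R, 0 < e -> exists2 del : R, 0 < del &
    forall s, 0 <= s <= 1 -> `|s - t| < del -> dist (g s) (g t) < e.

Definition len (g : R -> T) (a b : R) : \bar R :=
  ereal_sup [set z | exists (n : nat) (t : nat -> R),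
     [/\ t 0%N = a, t n = b, (forall i, t i <= t i.+1) &
         z = (\sum_(i < n) dist (g (t i)) (g (t i.+1)))%:E]].

Definition ell (g : R -> T) : \bar R := len g 0 1.

Definition rectifiable (g : R -> T) : Prop := (ell g < +oo)%E.

(* arc-length parametrization gamma~ : [0, ell gamma] -> X, with
   gamma = gamma~ o s_gamma *)
Definition arclen_param (g : R -> T) (s : R) : T :=
  g (inf [set t : R | 0 <= t <= 1 /\ (s%:E <= len g 0 t)%E]).

Definition line_int (rho : T -> \bar R) (g : R -> T) : \bar R :=
  (\int[lebesgue_measure]_(s in [set x : R | (0 <= x <= fine (ell g))%R]) rho (arclen_param g s))%E.

Definition admissible (p : R) (G : set (R -> T)) (rho : T -> \bar R) : Prop :=
  [/\ measurable_fun [set: T] rho, forall x, (0 <= rho x)%E &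
      forall g, G g -> (1 <= line_int rho g)%E].

Definition Mod (p : R) (G : set (R -> T)) : \bar R :=
  ereal_inf [set (\int[mu]_x (rho x `^ p))%E | rho in admissible p G].

Definition Gam (E F : set T) (C : R) : set (R -> T) :=
  [set g | curve g /\ E (g 0) /\ F (g 1) /\ (ell g <= (C * dist (g 0) (g 1))%:E)%E].

Definition thick_quasiconvex (p C : R) : Prop :=
  1 <= C /\
  forall E F : set T, measurable E -> measurable F ->
    (0 < mu E)%E -> (0 < mu F)%E -> (0 < Mod p (Gam E F C))%E.

Definition pwug (p : R) (u : T -> R) (g : T -> \bar R) : Prop :=
  [/\ measurable_fun [set: T] g, forall x, (0 <= g x)%E &
      Mod p [set c | curve c /\ rectifiable c /\
                     ~ ((`|u (c 0) - u (c 1)|)%:E <= line_int g c)%E] = 0%E].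

Definition Lp_ext (p : R) (g : T -> \bar R) : Prop :=
  (\int[mu]_x (`|g x| `^ p) < +oo)%E.

Definition newtonian (p : R) (u : T -> R) : Prop :=
  [/\ measurable_fun [set: T] u,
      (\int[mu]_x ((`|u x| `^ p)%:E) < +oo)%E &
      exists g, pwug p u g /\ Lp_ext p g].

Definition minimal_pwug (p : R) (u : T -> R) (g : T -> \bar R) : Prop :=
  [/\ pwug p u g, Lp_ext p g &
      forall g', pwug p u g' -> Lp_ext p g' -> {ae mu, forall x, (g x <= g' x)%E}].

Definition lipschitz_with (L : R) (v : T -> R) : Prop :=
  forall x y, `|v x - v y| <= L * dist x y.

End MMS.

From HB Require Import structures.
From mathcomp Require Import all_boot all_order all_algebra.
From mathcomp Require Import all_classical all_reals all_analysis measurable_realfun.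
From mathcomp Require Import lra ring.
Import numFieldNormedType.Exports.
Import Order.TTheory GRing.Theory Num.Theory.
Local Open Scope classical_set_scope.
Local Open Scope ring_scope.

(* Off a null set N we have g_u <= 1, so along every curve g either the upper
   gradient inequality fails (a curve family of p-modulus zero) or
   |u(g 0) - u(g 1)| <= int_g g_u <= ell(g) + int_g (oo * 1_N), and the last
   integral is 0 or oo.  Hence the curves with ell(g) < |u(g 0) - u(g 1)| have
   p-modulus zero, and thick quasiconvexity yields, for any two sets E, F of
   positive measure, points x in E and y in F with |u x - u y| <= C d(x, y).
   Applied to the sets {z in B(x, r) : |u z - u x| < r}, which have positive
   measure for a.e. x since a proper space is separable, this makes u
   C-Lipschitz on a set of full measure; McShane's extension of u from that set
   is the representative. *)

Lemma ae_mem_measure_gt0 {d} {T : measurableType d} {R : realType}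
    (mu : {measure set T -> \bar R}) (B : nat -> set T) :
  (forall i, measurable (B i)) -> {ae mu, forall x i, B i x -> (0 < mu (B i))%E}.
Proof.
move=> mB; have null i : mu.-negligible (B i `&` [set _ | mu (B i) = 0%E]).
  have [Bi0|Bi0] := pselect (mu (B i) = 0%E).
    by exists (B i); split => // ? [].
  by apply: negligibleS (negligible_set0 _) => ? [_ /Bi0].
apply: negligibleS (negligible_bigcup null) => x /= x_bad.
apply: contrapT => x_ok.
apply: x_bad => i Bix; rewrite lt0e measure_ge0 andbT.
by apply/eqP => Bi0; apply: x_ok; exists i.
Qed.

Section metric.
Context {R : realType} {disp : measure_display} {T : measurableType disp}.
Variable dist : T -> T -> R.
Hypothesis dist_metric : is_metric dist.

Lemma dist_ge0 x y : 0 <= dist x y. Proof. by case: dist_metric. Qed.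
Lemma distC x y : dist x y = dist y x. Proof. by case: dist_metric. Qed.
Lemma dist_triangle x y z : dist x z <= dist x y + dist y z.
Proof. by case: dist_metric. Qed.
Lemma dist_xx x : dist x x = 0. Proof. by case: dist_metric => _ /(_ x x) [_ ->]. Qed.

Lemma dball_dopen x r : dopen dist (dball dist x r).
Proof.
move=> y /= xy; exists (r - dist x y); first by rewrite subr_gt0.
move=> w /= yw; apply: le_lt_trans (dist_triangle x y w) _.
by rewrite -ltrBrDl.
Qed.

Lemma lipschitz_extension {C : R} {S : set T} {u : T -> R} : 0 <= C ->
  (forall x y, S x -> S y -> `|u x - u y| <= C * dist x y) ->
  exists v, lipschitz_with dist C v /\ forall x, S x -> v x = u x.
Proof.
move=> C0 uS; have [[y0 Sy0]|S0] := pselect (S !=set0); last first.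
  exists (fun=> 0); split.
    by move=> x y; rewrite subrr normr0 mulr_ge0 ?dist_ge0.
  by move=> x Sx; case: S0; exists x.
pose A x := [set u y + C * dist x y | y in S].
have A0 x : A x !=set0 by exists (u y0 + C * dist x y0), y0.
have Alb x : has_lbound (A x).
  exists (u y0 - C * dist x y0) => _ [y Sy <-].
  have := uS y y0 Sy Sy0; rewrite ler_norml => /andP[+ _].
  have := ler_wpM2l C0 (dist_triangle y x y0); rewrite mulrDr (distC y x).
  by lra.
pose v x := inf (A x).
have v_le x y : S y -> v x <= u y + C * dist x y.
  by move=> Sy; apply: ge_inf (Alb x) _ _; exists y.
have v_lip x x' : v x <= v x' + C * dist x x'.
  rewrite -lerBlDr; apply: lb_le_inf (A0 x') _ => _ [y Sy <-].
  have := ler_wpM2l C0 (dist_triangle x x' y); rewrite mulrDr.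
  by have := v_le x y Sy; lra.
exists v; split.
  move=> x x'; rewrite ler_norml; have := v_lip x' x; rewrite (distC x' x).
  by have := v_lip x x'; lra.
move=> x Sx; apply/le_anti.
rewrite (le_trans (v_le x x Sx)) ?dist_xx ?mulr0 ?addr0 //=.
apply: lb_le_inf (A0 x) _ => _ [y Sy <-].
by have := uS x y Sx Sy; rewrite ler_norml => /andP[_]; lra.
Qed.

Section proper.
Hypothesis dist_proper : dproper dist.

Lemma cball_finite_net (z : T) (r e : R) : 0 < e ->
  exists (m : nat) (c : nat -> T), forall x, dist z x <= r ->
    exists2 j, (j < m)%N & dist (c j) x < e.
Proof.
move=> e0; apply: contrapT => no_net.
have far m (c : nat -> T) : exists x, dist z x <= r /\
    forall j, (j < m)%N -> e <= dist (c j) x.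
  apply: contrapT => nfar; apply: no_net; exists m, c => x zx.
  apply: contrapT => nx; apply: nfar; exists x; split => // j jm.
  by rewrite leNgt; apply/negP => ?; apply: nx; exists j.
pose f m c := projT1 (cid (far m c)).
have fP m c : dist z (f m c) <= r /\
    forall j, (j < m)%N -> e <= dist (c j) (f m c).
  exact: projT2 (cid (far m c)).
(* [F k] lists the first [k] points of an [e]-separated sequence in the ball *)
pose F := fix F k := if k is k'.+1 then
  fun j => if (j < k')%N then F k' j else f k' (F k') else fun=> z.
pose s j := F j.+1 j.
have Fs k j : (j < k)%N -> F k j = s j.
  elim: k => // k IH; rewrite ltnS leq_eqVlt => /orP[/eqP -> //|jk].
  by rewrite /= jk IH.
have sE m : s m = f m (F m) by rewrite /s /= ltnn.
have s_sep j m : (j < m)%N -> e <= dist (s j) (s m).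
  by move=> jm; rewrite (sE m) -(Fs m j jm); apply: (fP m (F m)).2.
have s_ball k : dist z (s k) <= r by rewrite sE; exact: (fP _ _).1.
have ball_closed : dclosed dist [set x | dist z x <= r].
  move=> y /= /negP; rewrite -ltNge => ry.
  exists (dist z y - r); first by rewrite subr_gt0.
  move=> w; rewrite /dball /= => yw wr.
  have := dist_triangle z w y; rewrite (distC w y).
  by lra.
have ball_bounded : dbounded dist [set x | dist z x <= r].
  by exists z, (r + 1) => x /= zx; rewrite /dball /= ltr_pwDr.
have [phi [x [phi_incr [_ cvx]]]] :=
  dist_proper _ ball_closed ball_bounded s s_ball.
have [N HN] := cvx (e / 2) (divr_gt0 e0 (ltr0Sn _ 1)).
have := s_sep _ _ (phi_incr N N.+1 (ltnSn N)).
have := HN N (leqnn N); have := HN N.+1 (leqnSn N) => /= h1 h2.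
by have := dist_triangle (s (phi N)) x (s (phi N.+1)); rewrite (distC x); lra.
Qed.

Lemma proper_separable (z : T) :
  exists c : nat -> T, forall x e, 0 < e -> exists j, dist (c j) x < e.
Proof.
have net n k : exists c : nat -> T, forall x, dist z x <= n%:R ->
    exists j, dist (c j) x < k.+1%:R^-1.
  have [|m [c cP]] := cball_finite_net z n%:R (k.+1%:R^-1).
    by rewrite invr_gt0.
  by exists c => x /cP[j _ cx]; exists j.
pose cc n k := projT1 (cid (net n k)).
have ccP n k : forall x, dist z x <= n%:R ->
    exists j, dist (cc n k j) x < k.+1%:R^-1.
  exact: projT2 (cid (net n k)).
exists (fun j => if unpickle j is Some (n, k, i) then cc n k i else z) => x e e0.
set n := (Num.truncn (dist z x)).+1; set k := Num.truncn e^-1.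
have [i cx] := ccP n k x (ltW (truncnS_gt _)).
exists (pickle (n, k, i)); rewrite pickleK; apply: lt_trans cx _.
by rewrite invf_plt ?posrE ?ltr0Sn ?truncnS_gt.
Qed.
End proper.

Definition graph_ball (u : T -> R) (x : T) (r : R) : set T :=
  dball dist x r `&` u @^-1` ball (u x) r.

Section borel.
Hypothesis dist_borel : borel_structure dist.

Lemma dopen_measurable A : dopen dist A -> measurable A.
Proof. by move=> oA; rewrite dist_borel; exact: sub_sigma_algebra. Qed.

Lemma measurable_dball x r : measurable (dball dist x r).
Proof. exact/dopen_measurable/dball_dopen. Qed.

Lemma measurable_dball_preimage_ball (u : T -> R) x a r e :
  measurable_fun setT u -> measurable (dball dist x r `&` u @^-1` ball a e).
Proof.
move=> um; apply: measurableI; first exact: measurable_dball.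
by rewrite -[_ @^-1` _]setTI; apply: um => //; exact: measurable_ball.
Qed.

Lemma ell_ge0 (g : R -> T) : (0 <= ell dist g)%E.
Proof.
apply: (@le_trans _ _ (dist (g 0) (g 1))%:E); first by rewrite lee_fin dist_ge0.
apply: ereal_sup_ubound; exists 1%N, (fun i => if i == 0%N then 0 else 1); split => //.
  by case => [|i] //=; rewrite ?ler01 ?lexx.
by rewrite big_ord1.
Qed.

Lemma rectifiable_ellE (g : R -> T) :
  rectifiable dist g -> ell dist g = (fine (ell dist g))%:E.
Proof. by move=> gfin; rewrite fineK // ge0_fin_numE // ell_ge0. Qed.

Definition arclen_dom (g : R -> T) : set R :=
  [set s | 0 <= s <= fine (ell dist g)].

Lemma arclen_domE (g : R -> T) : arclen_dom g = `[0, fine (ell dist g)]%classic.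
Proof. by apply/seteqP; split => x /=; rewrite in_itv. Qed.

Lemma measurable_arclen_dom (g : R -> T) : measurable (arclen_dom g).
Proof. by rewrite arclen_domE; exact: measurable_itv. Qed.

Lemma lebesgue_measure_arclen_dom (g : R -> T) : rectifiable dist g ->
  lebesgue_measure (arclen_dom g) = ell dist g.
Proof.
move=> gfin; rewrite arclen_domE lebesgue_measure_itv /= [RHS]rectifiable_ellE //.
case: ifPn => [_|]; first by rewrite sube0.
rewrite lte_fin -leNgt => l0; suff -> : fine (ell dist g) = 0 by [].
by apply/le_anti; rewrite l0 fine_ge0 // ell_ge0.
Qed.

Lemma measurable_curve_comp (g : R -> T) (D : set R) (f : R -> R) :
  curve dist g -> measurable D -> measurable_fun D f ->
  (forall s, D s -> 0 <= f s <= 1) -> measurable_fun D (g \o f).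
Proof.
move=> cg mD mf f01; apply: (@measurability _ _ _ _ D _ (dopen dist) dist_borel).
move=> _ [W oW <-].
(* an open subset of R whose trace on [0, 1] is g @^-1` W *)
pose V := [set t : R | exists2 e : R, 0 < e &
  forall s, 0 <= s <= 1 -> `|s - t| < e -> W (g s)].
have VW t : 0 <= t <= 1 -> V t <-> W (g t).
  move=> t01; split; first by move=> [e e0]; apply => //; rewrite subrr normr0.
  move=> /oW[r r0 rW]; have [e e0 ge] := cg t t01 r r0.
  by exists e => // s s01 st; apply: rW; rewrite /dball /= distC; exact: ge.
have oV : open V.
  rewrite openE => t [e e0 eW]; apply/nbhs_ballP; exists (e / 2) => /=.
    by rewrite divr_gt0.
  move=> t'; rewrite /ball /= => tt'; exists (e / 2); first by rewrite divr_gt0.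
  move=> s s01 st'; apply: eW => //.
  rewrite -(subrK t' s) -addrA; apply: le_lt_trans (ler_normD _ _) _.
  by rewrite (distrC t' t) [ltRHS]splitr ltrD.
have -> : D `&` (g \o f) @^-1` W = D `&` f @^-1` V.
  by apply/seteqP; split => s [Ds fs]; split => //=; apply/(VW _ (f01 s Ds)).
exact: mf mD _ (open_measurable oV).
Qed.

Lemma measurable_arclen_param (g : R -> T) (rho : T -> \bar R) :
  curve dist g -> rectifiable dist g -> measurable_fun setT rho ->
  measurable_fun (arclen_dom g) (rho \o arclen_param dist g).
Proof.
move=> cg gfin mrho.
(* the alternative [t = 1] makes [tt] monotone on all of R without changing it
   on [arclen_dom g] *)
pose A s := [set t : R | 0 <= t <= 1 /\ ((s%:E <= len dist g 0 t)%E \/ t = 1)].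
pose tt s := inf (A s).
have A1 s : A s 1 by split; [rewrite ler01 lexx | right].
have Alb s : has_lbound (A s) by exists 0 => y [/andP[]].
have tt01 s : 0 <= tt s <= 1.
  apply/andP; split; first by apply: lb_le_inf; [exists 1|move=> y [/andP[]]].
  exact: ge_inf (Alb s) _ (A1 s).
have tt_nd : {homo tt : x y / x <= y}.
  move=> s s' ss'; apply: lb_le_inf; first by exists 1.
  move=> y [y01 sy]; apply: ge_inf (Alb s) _ _; split => //.
  by case: sy => [sy|->]; [left; apply: le_trans sy; rewrite lee_fin | right].
have arclenE s : arclen_dom g s -> arclen_param dist g s = g (tt s).
  move=> /andP[_ sl]; rewrite /arclen_param /tt; congr (g (inf _)).
  apply/seteqP; split => y /= [y01 sy]; split => //; first by left.
  by case: sy => // ->; rewrite -/(ell dist g) rectifiable_ellE // lee_fin.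
have mtt : measurable_fun (arclen_dom g) tt.
  exact: nondecreasing_measurable (measurable_arclen_dom g) tt_nd.
apply: (eq_measurable_fun (rho \o (g \o tt))).
  by move=> s /set_mem ? /=; rewrite arclenE.
apply: measurableT_comp mrho _.
exact: measurable_curve_comp cg (measurable_arclen_dom g) mtt (fun s _ => tt01 s).
Qed.

Section line_integral.
Variable g : R -> T.
Hypotheses (cg : curve dist g) (gfin : rectifiable dist g).

Lemma le_line_int (r1 r2 : T -> \bar R) :
  measurable_fun setT r1 -> measurable_fun setT r2 -> (forall x, 0 <= r1 x)%E ->
  (forall x, r1 x <= r2 x)%E -> (line_int dist r1 g <= line_int dist r2 g)%E.
Proof.
move=> m1 m2 r10 r12; apply: ge0_le_integral (fun s _ => r12 _) => //.
- exact: measurable_arclen_dom.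
- exact: measurable_arclen_param.
- exact: measurable_arclen_param.
Qed.

Lemma line_intD (r1 r2 : T -> \bar R) :
  measurable_fun setT r1 -> measurable_fun setT r2 ->
  (forall x, 0 <= r1 x)%E -> (forall x, 0 <= r2 x)%E ->
  line_int dist (r1 \+ r2)%E g = (line_int dist r1 g + line_int dist r2 g)%E.
Proof.
move=> m1 m2 r10 r20; apply: ge0_integralD => //.
- exact: measurable_arclen_dom.
- exact: measurable_arclen_param.
- exact: measurable_arclen_param.
Qed.

Lemma line_int_cst1 : line_int dist (cst 1%E) g = ell dist g.
Proof.
rewrite /line_int integral_cst ?mul1e; last exact: measurable_arclen_dom.
exact: lebesgue_measure_arclen_dom.
Qed.

Lemma line_int_gt0_idem (rho : T -> \bar R) :
  measurable_fun setT rho -> (forall x, 0 <= rho x)%E ->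
  (forall x, rho x + rho x = rho x)%E ->
  (0 < line_int dist rho g)%E -> line_int dist rho g = +oo%E.
Proof.
move=> mrho rho0 rho_idem.
have : line_int dist rho g = (line_int dist rho g + line_int dist rho g)%E.
  by rewrite -line_intD //; congr line_int; apply/funext => x /=; rewrite rho_idem.
case: (line_int _ _ _) => // r /eqP; rewrite -EFinD eqe -subr_eq0 opprD addNKr.
by rewrite oppr_eq0 lte_fin => /eqP ->; rewrite ltxx.
Qed.

End line_integral.

Variable mu : {measure set T -> \bar R}.

Definition essential_point (u : T -> R) (x : T) : Prop :=
  forall r, 0 < r -> (0 < mu (graph_ball u x r))%E.

Section separable.
Variable c : nat -> T.
Hypothesis c_dense : forall x e, 0 < e -> exists j, dist (c j) x < e.

Lemma graph_ball_countable_base (u : T -> R) : measurable_fun setT u ->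
  exists B : nat -> set T, (forall i, measurable (B i)) /\
    forall x r, 0 < r -> exists2 i, B i x & B i `<=` graph_ball u x r.
Proof.
move=> um.
pose B i := if unpickle i is Some (j, k, z) then
    dball dist (c j) k.+1%:R^-1 `&`
    u @^-1` ball ((z : int)%:~R * k.+1%:R^-1 : R) k.+1%:R^-1
  else set0.
exists B; split.
  move=> i; rewrite /B; case: unpickle => [[[j k] z]|] //.
  exact: measurable_dball_preimage_ball.
move=> x r r0; set k := Num.truncn (2 / r); set e : R := k.+1%:R^-1.
have e0 : 0 < e by rewrite invr_gt0.
have er : e + e <= r.
  have eK : e * k.+1%:R = 1 by rewrite mulVf.
  have := truncnS_gt (2 / r); rewrite -/k ltr_pdivrMr // => rK.
  by rewrite -(ler_pM2r (ltr0Sn R k)) mulrDl eK; lra.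
have [j cx] := c_dense x _ e0.
set z := Num.floor (k.+1%:R * u x).
have uz : `|u x - z%:~R * e| < e.
  have := floor_itv (k.+1%:R * u x); rewrite -/z intrD => /andP[z1 z2].
  have -> : u x - z%:~R * e = (k.+1%:R * u x - z%:~R) * e.
    by rewrite /e; field.
  rewrite normrM ger0_norm ?subr_ge0 // gtr0_norm // -[ltRHS]mul1r ltr_pM2r //.
  by rewrite ltrBlDl.
exists (pickle (j, k, z)); rewrite /B pickleK.
  by split => //=; rewrite /ball /= distrC.
move=> y [cy zy]; split; rewrite /dball /ball /= -/e in cx cy zy *.
  by have := dist_triangle x (c j) y; rewrite (distC x (c j)); lra.
have := ler_normD (u x - z%:~R * e) (z%:~R * e - u y).
by rewrite addrA subrK; lra.
Qed.

Lemma ae_essential_point (u : T -> R) : measurable_fun setT u ->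
  {ae mu, forall x, essential_point u x}.
Proof.
move=> um; have [B [mB BP]] := graph_ball_countable_base u um.
apply: filterS (ae_mem_measure_gt0 mu _ mB) => x Bpos r r0.
have [i Bix Bsub] := BP x r r0; apply: lt_le_trans (Bpos i Bix) _.
by apply: le_measure; rewrite ?inE //; exact: measurable_dball_preimage_ball.
Qed.

End separable.

Lemma Mod_ge0 (p : R) (G : set (R -> T)) : (0 <= Mod dist mu p G)%E.
Proof.
apply: le_ereal_inf_tmp => _ [rho _ <-].
by apply: integral_ge0 => x _; exact: poweR_ge0.
Qed.

Lemma le_Mod (p : R) (G1 G2 : set (R -> T)) :
  G1 `<=` G2 -> (Mod dist mu p G1 <= Mod dist mu p G2)%E.
Proof.
move=> G12; apply: ereal_inf_le_tmp => _ [rho [mrho rho0 rho1] <-].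
by exists rho => //; split => // g /G12; exact: rho1.
Qed.

Definition infty_on (N : set T) : T -> \bar R :=
  fun x => if x \in N then +oo%E else 0%E.

Lemma infty_on_ge0 N x : (0 <= infty_on N x)%E.
Proof. by rewrite /infty_on; case: ifP. Qed.

Lemma infty_on_idem N x : (infty_on N x + infty_on N x = infty_on N x)%E.
Proof. by rewrite /infty_on; case: ifP => _; rewrite ?adde0. Qed.

Lemma measurable_infty_on {N : set T} :
  measurable N -> measurable_fun setT (infty_on N).
Proof.
move=> mN; apply: measurable_fun_ifT => //; apply: (measurable_fun_bool true).
rewrite setTI (_ : _ @^-1` _ = N) //.
by apply/seteqP; split => x /=; [move/set_mem | move/mem_set].
Qed.

Definition steep_curves (u : T -> R) : set (R -> T) :=
  [set g | curve dist g /\ (ell dist g < (`|u (g 0) - u (g 1)|)%:E)%E].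

Lemma steep_curve_line_int_infty_on {u : T -> R} {gu : T -> \bar R}
    {N : set T} {g : R -> T} :
  measurable N -> measurable_fun setT gu -> (forall x, 0 <= gu x)%E ->
  (forall x, ~ N x -> gu x <= 1)%E -> steep_curves u g ->
  ((`|u (g 0) - u (g 1)|)%:E <= line_int dist gu g)%E ->
  line_int dist (infty_on N) g = +oo%E.
Proof.
move=> mN mgu gu0 gu1 [cg ell_lt] ug.
have gfin : rectifiable dist g by apply: lt_trans ell_lt (ltry _).
have mNoo := measurable_infty_on mN.
apply: line_int_gt0_idem => //; [exact: infty_on_ge0 | exact: infty_on_idem |].
rewrite ltNge; apply/negP => I0.
have : (line_int dist gu g <= line_int dist (infty_on N \+ cst 1) g)%E.
  apply: le_line_int => //; first exact: emeasurable_funD.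
  move=> x /=; rewrite /infty_on; case: ifPn => [_|xN].
    by rewrite addye // leey.
  by rewrite add0e gu1 // => /mem_set; apply/negP.
rewrite line_intD //; last exact: infty_on_ge0.
rewrite line_int_cst1 // => le_gu.
have := lt_le_trans ell_lt (le_trans ug (le_trans le_gu (geeDr _ I0))).
by rewrite ltxx.
Qed.

Lemma Mod_steep_curves {p : R} {u : T -> R} {gu : T -> \bar R} :
  pwug dist mu p u gu -> {ae mu, forall x, (gu x <= 1)%E} ->
  Mod dist mu p (steep_curves u) = 0%E.
Proof.
move=> [mgu gu0 Mod_bad] [N [mN N0 gu1]].
have gu_le1 x : ~ N x -> (gu x <= 1)%E.
  by move=> Nx; apply: contrapT => /gu1.
apply/le_anti; rewrite Mod_ge0 andbT -Mod_bad.
apply: le_ereal_inf_tmp => _ [rho [mrho rho0 rho1] <-].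
(* [rho] handles the curves along which [gu] fails to be an upper gradient,
   the infinite weight on the null set [N] the others *)
apply: ge_ereal_inf; exists (\int[mu]_x ((rho \+ infty_on N) x `^ p))%E.
  exists (rho \+ infty_on N)%E => //; split.
  - exact: emeasurable_funD (measurable_infty_on mN).
  - by move=> x; apply: adde_ge0 => //; exact: infty_on_ge0.
  move=> g g_steep; have [cg ell_lt] := g_steep.
  have gfin : rectifiable dist g by apply: lt_trans ell_lt (ltry _).
  have [ug|nug] := pselect ((`|u (g 0) - u (g 1)|)%:E <= line_int dist gu g)%E.
    apply: (@le_trans _ _ (line_int dist (infty_on N) g)).
      by rewrite (steep_curve_line_int_infty_on mN mgu gu0 gu_le1 g_steep ug) leey.
    apply: le_line_int => //.
    - exact: measurable_infty_on.
    - exact: emeasurable_funD (measurable_infty_on mN).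
    - exact: infty_on_ge0.
    - by move=> x; rewrite leeDr.
  apply: le_trans (rho1 g (conj cg (conj gfin nug))) _.
  by apply: le_line_int => //; [exact: emeasurable_funD (measurable_infty_on mN) |
    move=> x; rewrite leeDl // infty_on_ge0].
rewrite le_eqVlt; apply/orP; left; apply/eqP/ae_eq_integral => //.
- apply: measurableT_comp (measurable_poweR _) _.
  exact: emeasurable_funD (measurable_infty_on mN).
- exact: measurableT_comp (measurable_poweR _) mrho.
exists N; split => // x /= Nx; apply: contrapT => nNx; apply: Nx => _.
by rewrite /infty_on memNset // adde0.
Qed.

Lemma thick_quasiconvex_pair {p C : R} {u : T -> R} {gu : T -> \bar R} {E F : set T} :
  thick_quasiconvex dist mu p C -> pwug dist mu p u gu ->
  {ae mu, forall x, (gu x <= 1)%E} ->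
  measurable E -> measurable F -> (0 < mu E)%E -> (0 < mu F)%E ->
  exists x y, [/\ E x, F y & `|u x - u y| <= C * dist x y].
Proof.
move=> [_ thick] pw gu1 mE mF E0 F0; apply: contrapT => no_pair.
have : Gam dist E F C `<=` steep_curves u.
  move=> g [cg [Eg [Fg ellC]]]; split => //; apply: le_lt_trans ellC _.
  by rewrite lte_fin ltNge; apply/negP => ?; apply: no_pair; exists (g 0), (g 1).
move=> /(le_Mod p); rewrite (Mod_steep_curves pw gu1) => Mod_le0.
by have := lt_le_trans (thick E F mE mF E0 F0) Mod_le0; rewrite ltxx.
Qed.

Lemma essential_point_lipschitz {p C : R} {u : T -> R} {gu : T -> \bar R} :
  thick_quasiconvex dist mu p C -> pwug dist mu p u gu ->
  {ae mu, forall x, (gu x <= 1)%E} -> measurable_fun setT u ->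
  forall x y, essential_point u x -> essential_point u y ->
  `|u x - u y| <= C * dist x y.
Proof.
move=> thick pw gu1 um x y ex ey; have C0 : 0 <= C by have := thick.1; lra.
apply/ler_addgt0Pr => eps eps0; pose del := eps / (2 * (1 + C)).
have del0 : 0 < del by rewrite divr_gt0 //; lra.
have epsE : eps = 2 * del + 2 * (C * del) by rewrite /del; field; lra.
have mB z : measurable (graph_ball u z del).
  exact: measurable_dball_preimage_ball.
have [x' [y' [[xx' ux'] [yy' uy'] u'C]]] :=
  thick_quasiconvex_pair thick pw gu1 (mB x) (mB y) (ex _ del0) (ey _ del0).
rewrite /dball /ball /= in xx' ux' yy' uy'.
have d' : C * dist x' y' <= C * dist x y + 2 * (C * del).
  have : dist x' y' <= dist x y + 2 * del.
    have := dist_triangle x' x y'; have := dist_triangle x y y'.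
    by rewrite (distC x' x); lra.
  by move/(ler_wpM2l C0); rewrite mulrDr mulrCA.
have := ler_normD (u x - u x') (u x' - u y); rewrite addrA subrK.
have := ler_normD (u x' - u y') (u y' - u y); rewrite addrA subrK.
by rewrite (distrC (u y')); lra.
Qed.

End borel.
End metric.

Theorem proposition3p2 (R : realType) (disp : measure_display)
  (T : measurableType disp) (dist : T -> T -> R)
  (mu : {measure set T -> \bar R}) (p C : R) :
  1 <= p ->
  metric_measure_space dist mu ->
  infinitesimally_doubling dist mu ->
  thick_quasiconvex dist mu p C ->
  forall u : T -> R, newtonian dist mu p u ->
  forall gu : T -> \bar R, minimal_pwug dist mu p u gu ->
  {ae mu, forall x, (gu x <= 1)%E} ->
  exists v : T -> R, lipschitz_with dist C v /\ {ae mu, forall x, v x = u x}.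
Proof.
move=> _ [dm dp db _] _ thick u [um _ _] gu [pw _ _] gu1.
have C0 : 0 <= C by have := thick.1; lra.
have [c c_dense] := proper_separable dist dm dp point.
have [v [v_lip vu]] := lipschitz_extension dist dm C0
  (essential_point_lipschitz dist dm db mu thick pw gu1 um).
exists v; split => //.
by apply: filterS (ae_essential_point dist dm db mu c c_dense u um) => x /vu.
Qed.
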